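(* Let $G$ be a topological group which is SIN, i.e. the identity of $G$ has a neighbourhood base consisting of open sets $V$ invariant under conjugation ($g^{-1}Vg=V$ for all $g\in G$). Let $(X,\mu)$ be a standard Lebesgue (probability) space. Then the topological group $L^0(X,\mu;G)$ is SIN as well.
   Context: For a topological group $G$ and a standard Lebesgue probability space $(X,\mu)$, $L^0(X,\mu;G)$ denotes the group of all $\mu$-a.e. equivalence classes of strongly (Bourbaki) measurable maps $f\colon X\to G$, i.e. maps such that for every $\varepsilon>0$ there is a compact $K\subseteq X$ with $\mu(K)>1-\varepsilon$ on which $f$ is continuous; the group operations are pointwise. It carries the topology of convergence in measure, a neighbourhood base at the identity being formed by the sets $[V,\varepsilon]=\{f\in L^0(X,\mu;G)\colon \mu\{x\in X\colon f(x)\in V\}>1-\varepsilon\}$, where $V$ runs over a neighbourhood base at the identity of $G$ and $\varepsilon>0$. *)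

From HB Require Import structures.
From mathcomp Require Import all_boot all_order all_algebra.
From mathcomp Require Import all_classical all_reals all_analysis.
Set Implicit Arguments. Unset Strict Implicit. Unset Printing Implicit Defensive.
Import Order.TTheory GRing.Theory Num.Theory.
Local Open Scope classical_set_scope.
Local Open Scope ring_scope.

Record is_topgroup (G : topologicalType) (mul : G -> G -> G) (inv : G -> G)
    (e : G) : Prop := IsTopGroup {
  tg_mulA : forall x y z, mul x (mul y z) = mul (mul x y) z;
  tg_mul1g : forall x, mul e x = x;
  tg_mulVg : forall x, mul (inv x) x = e;
  tg_mul_cont : continuous (fun p : G * G => mul p.1 p.2);
  tg_inv_cont : continuous inv }.

Definition SIN (G : topologicalType) (mul : G -> G -> G) (inv : G -> G) (e : G) :=
  forall U : set G, nbhs e U ->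
    exists V : set G, [/\ open V, V e, V `<=` U &
      forall g : G, [set mul (inv g) (mul v g) | v in V] = V].

(* Polish space: (a Hausdorff complete pseudometric space, hence a complete
   metric space) that is separable. *)
Definition polish {R : realType} (X : completePseudoMetricType R) :=
  hausdorff_space X /\ exists D : set X, countable D /\ dense D.

Section L0.
Context {R : realType} {X : completePseudoMetricType R}.
Local Notation BX := (g_sigma_algebraType (@open X)).
Variable mu : probability BX R.
Context {G : topologicalType} (mul : G -> G -> G) (inv : G -> G) (e : G).

(* "mu A > r" for a possibly non-Borel set A, read in the completion of mu:
   some Borel subset of A has measure > r (inner measure > r). *)
Definition mu_gt (A : set X) (r : R) :=
  exists B : set BX, [/\ measurable B, B `<=` A & (r%:E < mu B)%E].

Definition strongly_measurable (f : X -> G) :=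
  forall eps : R, 0 < eps ->
    exists K : set X, [/\ compact K, mu_gt K (1 - eps) & {within K, continuous f}].

(* representatives of elements of L^0(X,mu;G) *)
Definition L0 : set (X -> G) := [set f | strongly_measurable f].

Definition Lmul (f g : X -> G) : X -> G := fun x => mul (f x) (g x).
Definition Linv (f : X -> G) : X -> G := fun x => inv (f x).
Definition Lone : X -> G := fun _ => e.

Definition Lnbhd0 (V : set G) (eps : R) : set (X -> G) :=
  [set f | L0 f /\ mu_gt [set x | V (f x)] (1 - eps)].

Definition L0_nbhs1 (U : set (X -> G)) :=
  exists V : set G, exists eps : R, [/\ nbhs e V, 0 < eps & Lnbhd0 V eps `<=` U].

Definition L0_open (O : set (X -> G)) :=
  O `<=` L0 /\
  forall f, O f -> exists V : set G, exists eps : R,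
    [/\ nbhs e V, 0 < eps & [set Lmul f h | h in Lnbhd0 V eps] `<=` O].

Definition L0_SIN :=
  forall U : set (X -> G), L0_nbhs1 U ->
    exists O : set (X -> G), [/\ L0_open O, O Lone, O `<=` U &
      forall g, L0 g -> [set Lmul (Linv g) (Lmul h g) | h in O] = O].
End L0.

From HB Require Import structures.
From mathcomp Require Import all_boot all_order all_algebra.
From mathcomp Require Import all_classical all_reals all_analysis.
Set Implicit Arguments. Unset Strict Implicit. Unset Printing Implicit Defensive.
Import Order.TTheory GRing.Theory Num.Theory.
Local Open Scope classical_set_scope.
Local Open Scope ring_scope.

(* If W is a conjugation-invariant neighbourhood of e in G, the basic set
   [W, eps] is invariant under conjugation by any g in L^0, because g^-1 f g
   takes its values in W exactly where f does.  Since [W, eps] need not be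
   open, we shrink it to the set of f such that f [V, eps'] lies in [W, eps]
   for some invariant neighbourhood V and some eps' > 0.  This set is open
   (SIN and continuity of the product give an invariant V' with V' V' in V),
   contains 1, lies in [W, eps] and remains conjugation-invariant, because
   (g^-1 f g) h = g^-1 (f (g h g^-1)) g and conjugation preserves [V, eps'].
   The one analytic input is that constant maps are strongly measurable, that
   is, that a Borel probability on a Polish space is tight: finite unions of
   closed 1/(n+1)-balls around a dense sequence can be chosen with complements
   of measure at most eps 2^-(n+2), and their intersection is closed and
   totally bounded, hence compact. *)

Lemma ultra_bigcup_ord {T} (F : set_system T) (UF : UltraFilter F)
    (A : nat -> set T) N :
  F (\bigcup_(k < N) A k) -> exists2 k, (k < N)%N & F (A k).
Proof.
rewrite bigcup_mkord; elim: N => [|N IH].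
  by rewrite big_ord0 => /filter_not_empty.
rewrite big_ord_recr /=; set B := \big[setU/set0]_(k < N) A k.
have [/IH [k kN FAk] _|FC FU] := in_ultra_setVsetC B UF.
  by exists k => //; exact: ltnW.
by exists N => //; apply: filterS (filterI FU FC) => x [[|//] + []].
Qed.

Definition separable (T : topologicalType) :=
  exists D : set T, countable D /\ dense D.

Section Tightness.
Context {R : realType} {X : completePseudoMetricType R}.
Local Notation BX := (g_sigma_algebraType (@open X)).

Lemma closed_Borel_measurable (A : set X) : closed A -> measurable (A : set BX).
Proof.
by move=> /closed_openC/sub_sigma_algebra/(@measurableC _ BX); rewrite setCK.
Qed.

Lemma closed_bigcup_closed_ball (c : nat -> X) (r : R) N :
  closed (\bigcup_(k < N) closed_ball (c k) r).
Proof.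
by rewrite bigcup_mkord; apply: closed_bigsetU => k _; exact: closed_ball_closed.
Qed.

Lemma closed_finite_ball_cover_compact (K : set X) : closed K ->
    (forall r : R, 0 < r ->
      exists (c : nat -> X) N, K `<=` \bigcup_(k < N) closed_ball (c k) r) ->
  compact K.
Proof.
move=> clK cover; rewrite compact_ultra => F UF FK.
have PF : ProperFilter F := ultra_proper.
have /cauchy_cvg cvgF : cauchy F.
  apply/cauchy_ballP => _/posnumP[r].
  have [c [N KN]] := cover (r%:num / 2 / 2) (gt0 _).
  have [k _ Fk] := ultra_bigcup_ord UF (filterS KN FK).
  pose Bk := closed_ball (c k) (r%:num / 2 / 2).
  exists (Bk, Bk) => //.
  move=> [x y] /= [/subset_closure_half cx /subset_closure_half cy].
  by rewrite (splitr r%:num); apply: ball_triangle (ball_sym (cx _)) (cy _).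
by exists (lim F); split => //; exact: (@closed_cvg _ _ F _ id K clK FK _ cvgF).
Qed.

Lemma separable_closed_ball_cover (x0 : X) : separable X ->
  exists c : nat -> X,
    forall (x : X) (r : R), 0 < r -> exists n, closed_ball (c n) r x.
Proof.
move=> [D [/countable_injP [g ginj] dD]].
pose c n := xget x0 [set d | D d /\ g d = n].
have cK d : D d -> c (g d) = d.
  move=> Dd; have [Dcd gcd] : [set d' | D d' /\ g d' = g d] (c (g d)).
    by apply: xgetPex; exists d.
  by apply: ginj; rewrite ?inE.
exists c => x r r0.
have [|d [/interior_subset xd Dd]] := dD (ball x r)° _ (@open_interior _ _).
  by exists x; exact: nbhsx_ballx.
by exists (g d); rewrite cK//; apply: subset_closed_ball; exact: ball_sym.
Qed.

Variable mu : probability BX R.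

Lemma probability_nonempty : [set: X] !=set0.
Proof.
apply/set0P/eqP => X0; have := probability_setT mu.
by rewrite (_ : [set: BX] = set0)// measure0 => -[] /eqP; rewrite eq_sym oner_eq0.
Qed.

Lemma probability_setC_lt (A : set BX) (r : R) : measurable A ->
  ((1 - r)%:E < mu A)%E = (mu (~` A) < r%:E)%E.
Proof.
move=> mA; rewrite probability_setC//.
have: mu A \is a fin_num by rewrite fin_num_measure.
by case: (mu A) => // a _; rewrite -EFinB !lte_fin ltrBlDr -ltrBlDl.
Qed.

Lemma probability_finite_ball_cover_large (c : nat -> X) (r del : R) :
    (forall x : X, exists n, closed_ball (c n) r x) -> 0 < del ->
  exists N, (mu (~` \bigcup_(k < N) closed_ball (c k) r) < del%:E)%E.
Proof.
move=> cover del0; pose A N := \bigcup_(k < N) closed_ball (c k) r.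
have mA N : measurable (A N : set BX).
  by apply: closed_Borel_measurable; exact: closed_bigcup_closed_ball.
have AT : \bigcup_N A N = setT.
  apply/seteqP; split => // x _; have [k ?] := cover x.
  by exists k.+1 => //; exists k => /=.
have ndA : nondecreasing_seq A.
  move=> N M NM; apply/subsetPset => x [k /= kN ?].
  by exists k => //=; exact: leq_trans NM.
have cvgA : mu \o A @ \oo --> (1%E : \bar R).
  rewrite -(probability_setT mu) -AT.
  exact: nondecreasing_cvg_mu (bigcup_measurable (fun N _ => mA N)) ndA.
have [|N _ AN] := cvgA _ (open_ereal_gt' (_ : (1 - del)%:E < 1)%E).
  by rewrite lte_fin gtrBl.
by exists N; rewrite -probability_setC_lt; [exact: (AN N (leqnn _))|exact: mA].
Qed.

Lemma separable_probability_tight : separable X ->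
  forall eps : R, 0 < eps -> exists K : set X, compact K /\ mu_gt mu K (1 - eps).
Proof.
move=> sepX eps eps0.
have [x0 _] := probability_nonempty.
have [c cover] := separable_closed_ball_cover x0 sepX.
pose r (n : nat) : R := n.+1%:R^-1.
pose del (n : nat) : R := eps / 2 / (2 ^ n.+1)%:R.
pose A n N := \bigcup_(k < N) closed_ball (c k) (r n).
have /choice [N AN] n : exists N, (mu (~` A n N) < (del n)%:E)%E.
  apply: probability_finite_ball_cover_large => [x|].
    by apply: cover; rewrite invr_gt0.
  by rewrite !divr_gt0// ltr0n expn_gt0.
pose K := \bigcap_n A n (N n).
have clK : closed K.
  by apply: closed_bigI => n _; exact: closed_bigcup_closed_ball.
exists K; split.
  apply: closed_finite_ball_cover_compact => // _/posnumP[s].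
  have [n _ /(_ n (leqnn n)) rs] := near_infty_natSinv_lt s.
  exists c, (N n) => x /(_ n I) [k kN /(le_closed_ball (ltW rs)) xk].
  by exists k.
exists K; split => //; first exact: closed_Borel_measurable.
rewrite probability_setC_lt; last exact: closed_Borel_measurable.
have mAC n : measurable (~` A n (N n) : set BX).
  apply: measurableC; apply: closed_Borel_measurable.
  exact: closed_bigcup_closed_ball.
apply: (@le_lt_trans _ _ (eps / 2)%:E); last first.
  by rewrite lte_fin ltr_pdivrMr// ltr_pMr// ltr1n.
rewrite /K setC_bigcap.
have mUAC : measurable (\bigcup_n ~` A n (N n) : set BX).
  by apply: bigcup_measurable => n _; exact: mAC.
apply: le_trans (measure_sigma_subadditive mu mAC mUAC _) _ => [x //|].
apply: le_trans (epsilon_trick0 xpredT _); last by rewrite divr_ge0// ltW.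
by apply: lee_nneseries => [n _ _|n _]; [exact: measure_ge0|exact/ltW/AN].
Qed.

End Tightness.

Section GroupLaws.
Variables (G : Type) (mul : G -> G -> G) (inv : G -> G) (e : G).
Hypotheses (mulA : forall x y z, mul x (mul y z) = mul (mul x y) z)
  (mul1g : forall x, mul e x = x) (mulVg : forall x, mul (inv x) x = e).

Lemma mulgV x : mul x (inv x) = e.
Proof.
rewrite -[LHS]mul1g -{1}(mulVg (inv x)) -mulA (mulA (inv x) x) mulVg mul1g.
exact: mulVg.
Qed.

Lemma mulg1 x : mul x e = x.
Proof. by rewrite -(mulVg x) mulA mulgV mul1g. Qed.

Lemma invgK x : inv (inv x) = x.
Proof. by rewrite -[RHS]mul1g -(mulVg (inv x)) -mulA mulVg mulg1. Qed.

Lemma mulgVK x y : mul (mul x (inv y)) y = x.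
Proof. by rewrite -mulA mulVg mulg1. Qed.

Definition gconj (c v : G) := mul (inv c) (mul v c).

Lemma gconjMr a b c : mul (gconj a b) c = gconj a (mul b (gconj (inv a) c)).
Proof. by rewrite /gconj invgK !mulA mulgVK. Qed.

Lemma gconjK a b : gconj a (gconj (inv a) b) = b.
Proof. by rewrite /gconj invgK !mulA mulVg mul1g mulgVK. Qed.

Definition conj_stable (V : set G) := forall c v, V v -> V (gconj c v).

End GroupLaws.

Section SINNeighbourhoods.
Variables (G : topologicalType) (mul : G -> G -> G) (inv : G -> G) (e : G).
Hypothesis sinG : SIN mul inv e.

Lemma SIN_conj_stable U : nbhs e U ->
  exists V, [/\ nbhs e V, V `<=` U & conj_stable mul inv V].
Proof.
move=> /sinG [V [oV Ve VU Vinv]]; exists V; split => //.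
  exact: open_nbhs_nbhs.
by move=> c v Vv; rewrite -(Vinv c); exists v.
Qed.

Hypothesis (TG : is_topgroup mul inv e).

Lemma SIN_conj_stable_mul U : nbhs e U ->
  exists V, [/\ nbhs e V, conj_stable mul inv V &
    forall a b, V a -> V b -> U (mul a b)].
Proof.
move=> nU; have : nbhs (e, e) [set p : G * G | U (mul p.1 p.2)].
  apply: (@tg_mul_cont _ _ _ _ TG (e, e)); by rewrite /= (tg_mul1g TG).
move=> [[A B] /= [nA nB] AB].
have [V [nV VAB Vstable]] := SIN_conj_stable (filterI nA nB).
exists V; split => // a b /VAB [Aa _] /VAB [_ Bb].
exact: (AB (a, b)).
Qed.

End SINNeighbourhoods.

Section StronglyMeasurable.
Context {R : realType} {X : completePseudoMetricType R}.
Local Notation BX := (g_sigma_algebraType (@open X)).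
Variable mu : probability BX R.

Lemma mu_gtS (A B : set X) r : A `<=` B -> mu_gt mu A r -> mu_gt mu B r.
Proof.
by move=> AB [C [mC CA Cr]]; exists C; split => //; exact: subset_trans AB.
Qed.

Lemma mu_gtT (eps : R) : 0 < eps -> mu_gt mu setT (1 - eps).
Proof.
by move=> eps0; exists setT; split => //; rewrite probability_setT lte_fin gtrBl.
Qed.

Lemma mu_gtI (A B : set X) a b : mu_gt mu A (1 - a) -> mu_gt mu B (1 - b) ->
  mu_gt mu (A `&` B) (1 - (a + b)).
Proof.
move=> [C [mC CA Ca]] [D [mD DB Db]]; have mCD := measurableI _ _ mC mD.
exists (C `&` D); split => //; first by move=> x [/CA ? /DB ?].
move: Ca Db; rewrite !probability_setC_lt// EFinD setCI => Ca Db.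
apply: le_lt_trans (lteD Ca Db).
by apply: measureU2; exact: measurableC.
Qed.

Context {G : topologicalType}.

Lemma strongly_measurable_cst (c : G) : separable X ->
  strongly_measurable mu (fun=> c).
Proof.
move=> sepX eps eps0.
have [K [cK muK]] := separable_probability_tight mu sepX eps0.
by exists K; split => // x; exact: cvg_cst.
Qed.

Lemma strongly_measurable_comp {H : topologicalType} (h : G -> H) (f : X -> G) :
  continuous h -> strongly_measurable mu f -> strongly_measurable mu (h \o f).
Proof.
move=> ch sf eps eps0; have [K [cK muK cf]] := sf _ eps0.
by exists K; split => // x; apply: continuous_comp (cf x) _; exact: ch.
Qed.

Lemma strongly_measurable_op2 (op : G -> G -> G) (f g : X -> G) :
    hausdorff_space X -> continuous (fun p : G * G => op p.1 p.2) ->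
    strongly_measurable mu f -> strongly_measurable mu g ->
  strongly_measurable mu (fun x => op (f x) (g x)).
Proof.
move=> hX cop sf sg eps eps0; have eps20 : 0 < eps / 2 by rewrite divr_gt0.
have [K1 [cK1 muK1 cf]] := sf _ eps20; have [K2 [cK2 muK2 cg]] := sg _ eps20.
exists (K1 `&` K2); split.
- by apply: compact_closedI => //; exact: compact_closed.
- by rewrite {1}(splitr eps); exact: mu_gtI.
- have cf' := continuous_subspaceW (@subIsetl _ K1 K2) cf.
  have cg' := continuous_subspaceW (@subIsetr _ K1 K2) cg.
  move=> x; apply: continuous2_cvg; first exact: (cop (f x, g x)).
    exact: cf'.
  exact: cg'.
Qed.

End StronglyMeasurable.

Section L0Group.
Context {R : realType} {X : completePseudoMetricType R}.
Local Notation BX := (g_sigma_algebraType (@open X)).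
Variable mu : probability BX R.
Context {G : topologicalType} (mul : G -> G -> G) (inv : G -> G) (e : G).
Hypotheses (polishX : polish X) (TG : is_topgroup mul inv e).

Let mulA := tg_mulA TG.
Let mul1g := tg_mul1g TG.
Let mulVg := tg_mulVg TG.

Definition Lconj (g h : X -> G) := Lmul mul (Linv inv g) (Lmul mul h g).

Lemma LmulA (f g h : X -> G) :
  Lmul mul (Lmul mul f g) h = Lmul mul f (Lmul mul g h).
Proof. by apply: funext => x; rewrite /Lmul mulA. Qed.

Lemma Lmul1g (f : X -> G) : Lmul mul (Lone e) f = f.
Proof. by apply: funext => x; rewrite /Lmul mul1g. Qed.

Lemma Lmulg1 (f : X -> G) : Lmul mul f (Lone e) = f.
Proof. by apply: funext => x; rewrite /Lmul (mulg1 mulA mul1g mulVg). Qed.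

Lemma LconjMr (g h k : X -> G) :
  Lmul mul (Lconj g h) k = Lconj g (Lmul mul h (Lconj (Linv inv g) k)).
Proof. by apply: funext => x; exact: (gconjMr mulA mul1g mulVg). Qed.

Lemma LconjK (g h : X -> G) : Lconj g (Lconj (Linv inv g) h) = h.
Proof. by apply: funext => x; exact: (gconjK mulA mul1g mulVg). Qed.

Lemma L0_mul (f g : X -> G) : L0 mu f -> L0 mu g -> L0 mu (Lmul mul f g).
Proof. exact: strongly_measurable_op2 polishX.1 (tg_mul_cont TG). Qed.

Lemma L0_inv (f : X -> G) : L0 mu f -> L0 mu (Linv inv f).
Proof. exact: strongly_measurable_comp (tg_inv_cont TG). Qed.

Lemma L0_one : L0 mu (Lone e).
Proof. exact: strongly_measurable_cst polishX.2. Qed.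

Lemma L0_conj (g h : X -> G) : L0 mu g -> L0 mu h -> L0 mu (Lconj g h).
Proof. by move=> Lg Lh; apply: L0_mul; [exact: L0_inv | exact: L0_mul]. Qed.

Lemma Lnbhd0S (V V' : set G) (eps : R) :
  V `<=` V' -> Lnbhd0 mu V eps `<=` Lnbhd0 mu V' eps.
Proof. by move=> VV' h [Lh muh]; split => //; apply: mu_gtS muh => x /VV'. Qed.

Lemma Lnbhd0_one (V : set G) (eps : R) :
  0 < eps -> V e -> Lnbhd0 mu V eps (Lone e).
Proof.
by move=> eps0 Ve; split; [exact: L0_one | exact: mu_gtS (mu_gtT mu eps0)].
Qed.

Lemma Lnbhd0_mul (V1 V2 V : set G) (eps1 eps2 : R) (h k : X -> G) :
    (forall a b, V1 a -> V2 b -> V (mul a b)) ->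
    Lnbhd0 mu V1 eps1 h -> Lnbhd0 mu V2 eps2 k ->
  Lnbhd0 mu V (eps1 + eps2) (Lmul mul h k).
Proof.
move=> V12 [Lh muh] [Lk muk]; split; first exact: L0_mul.
by apply: mu_gtS (mu_gtI muh muk) => x [/V12 hk /hk].
Qed.

Lemma Lnbhd0_conj (V : set G) (eps : R) (g h : X -> G) :
  conj_stable mul inv V -> L0 mu g -> Lnbhd0 mu V eps h ->
  Lnbhd0 mu V eps (Lconj g h).
Proof.
move=> stV Lg [Lh muh]; split; first exact: L0_conj.
by apply: mu_gtS muh => x hx; exact: stV.
Qed.

Definition conj_interior (W : set G) (eps : R) : set (X -> G) :=
  [set f | L0 mu f /\ exists V eps',
     [/\ nbhs e V, conj_stable mul inv V, 0 < eps' &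
       [set Lmul mul f h | h in Lnbhd0 mu V eps'] `<=` Lnbhd0 mu W eps]].

Lemma conj_interior_open (W : set G) (eps : R) : SIN mul inv e ->
  L0_open mu mul e (conj_interior W eps).
Proof.
move=> sinG; split => [f [] //|f [Lf [V [eps' [nV stV eps'0 fV]]]]].
have [V' [nV' stV' V'V]] := SIN_conj_stable_mul sinG TG nV.
have eps'20 : 0 < eps' / 2 by rewrite divr_gt0.
exists V', (eps' / 2); split => // _ [h hV' <-].
split; first by apply: L0_mul => //; case: hV'.
exists V', (eps' / 2); split => // _ [k kV' <-].
rewrite LmulA; apply: fV; exists (Lmul mul h k) => //.
by rewrite (splitr eps'); exact: Lnbhd0_mul V'V hV' kV'.
Qed.

Lemma conj_interior1 (W : set G) (eps : R) :
  nbhs e W -> conj_stable mul inv W -> 0 < eps -> conj_interior W eps (Lone e).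
Proof.
move=> nW stW eps0; split; first exact: L0_one.
by exists W, eps; split => // _ [h hW <-]; rewrite Lmul1g.
Qed.

Lemma conj_interior_sub (W : set G) (eps : R) :
  conj_interior W eps `<=` Lnbhd0 mu W eps.
Proof.
move=> f [Lf [V [eps' [nV _ eps'0 fV]]]]; rewrite -[f]Lmulg1.
by apply: fV; exists (Lone e) => //; exact: Lnbhd0_one (nbhs_singleton nV).
Qed.

Lemma conj_interiorJ (W : set G) (eps : R) (g h : X -> G) :
  conj_stable mul inv W -> L0 mu g ->
  conj_interior W eps h -> conj_interior W eps (Lconj g h).
Proof.
move=> stW Lg [Lh [V [eps' [nV stV eps'0 hV]]]]; split; first exact: L0_conj.
exists V, eps'; split => // _ [k kV <-]; rewrite LconjMr.
apply: Lnbhd0_conj => //; apply: hV; exists (Lconj (Linv inv g) k) => //.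
exact: Lnbhd0_conj (L0_inv Lg) kV.
Qed.

Lemma conj_interior_conj (W : set G) (eps : R) (g : X -> G) :
  conj_stable mul inv W -> L0 mu g ->
  [set Lconj g h | h in conj_interior W eps] = conj_interior W eps.
Proof.
move=> stW Lg; apply/seteqP; split => [_ [h Wh <-]|h Wh].
  exact: conj_interiorJ.
exists (Lconj (Linv inv g) h); last exact: LconjK.
exact: conj_interiorJ (L0_inv Lg) Wh.
Qed.

End L0Group.

Unset Implicit Arguments.

Theorem lemma1 (R : realType) (X : completePseudoMetricType R)
  (mu : probability (g_sigma_algebraType (@open X)) R)
  (G : topologicalType) (mul : G -> G -> G) (inv : G -> G) (e : G) :
  polish X -> is_topgroup mul inv e -> SIN mul inv e ->
  L0_SIN mu mul inv e.
Proof.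
move=> polishX TG sinG U [V [eps [nV eps0 epsV]]].
have [W [nW WV stW]] := SIN_conj_stable sinG nV.
exists (conj_interior mu mul inv e W eps); split.
- exact: conj_interior_open.
- exact: conj_interior1.
- by move=> f /(conj_interior_sub polishX TG) /(Lnbhd0S WV) /epsV.
- by move=> g Lg; exact: conj_interior_conj.
Qed.
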